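(* Let $m\ge0$ and let $\beta_m>0$ be a real number such that $c(h)\le\beta_m\|h\|$ for every $h\in\mathbb{R}[y]$ of degree at most $m$. For $i=1,\dots,k$, let $f_i,g_i\in\mathbb{R}[y]$ be of degree $\le m$, and let $f=\sum_{i=1}^kf_i^2$, $g=\sum_{i=1}^kg_i^2$. If $\epsilon\ge0$ is such that $c(g_i-f_i)\le\epsilon$ for $i=1,\dots,k$, then $$c(g-f)\le(m+1)k\epsilon\cdot\bigl(\epsilon+2\beta_m\sqrt{\|f\|}\bigr).$$
   Context: For a polynomial $h=\sum_{i}a_iy^i\in\mathbb{R}[y]$, $c(h)=\max_i|a_i|$ (maximum absolute value of the coefficients) and $\|h\|=\max\{|h(t)|: -1\le t\le 1\}$. *)

From HB Require Import structures.
From mathcomp Require Import all_boot all_order all_algebra.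
From mathcomp Require Import all_classical all_reals.
Set Implicit Arguments. Unset Strict Implicit. Unset Printing Implicit Defensive.
Import Order.TTheory GRing.Theory Num.Theory.
Local Open Scope ring_scope.
Local Open Scope classical_set_scope.

Definition coefmax (R : realType) (h : {poly R}) : R :=
  \big[Num.max/0]_(i < size h) `|h`_i|.

(* ||h||: max { |h(t)| : -1 <= t <= 1 }, written as a supremum
   (the max exists by continuity and compactness). *)
Definition supnorm (R : realType) (h : {poly R}) : R :=
  sup [set `|h.[t]| | t in [set t : R | -1 <= t <= 1]].

From HB Require Import structures.
From mathcomp Require Import all_boot all_order all_algebra.
From mathcomp Require Import all_classical all_reals.
From mathcomp Require Import ring lra zify.
Set Implicit Arguments. Unset Strict Implicit. Unset Printing Implicit Defensive.
Import Order.TTheory GRing.Theory Num.Theory.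
Local Open Scope ring_scope.

(* Write g_i^2 - f_i^2 = d_i^2 + 2 d_i f_i with d_i = g_i - f_i.  The
   coefficient norm c is subadditive and c(pq) <= (m+1) c(p) c(q) when
   deg p <= m, so c(g_i^2 - f_i^2) <= (m+1) eps (eps + 2 c(f_i)).  Finally
   c(f_i) <= beta ||f_i|| and ||f_i||^2 <= ||f|| since f_i^2 <= f pointwise;
   summing over i gives the factor k. *)

Section CoefMax.
Variable R : realType.
Implicit Types p q : {poly R}.

Lemma coefmax_ge0 p : 0 <= coefmax p.
Proof. by rewrite /coefmax; elim/big_ind: _ => //= x y hx hy; rewrite le_max hx. Qed.

Lemma normr_coef_le_coefmax p i : `|p`_i| <= coefmax p.
Proof.
have [hi|hi] := ltnP i (size p); last by rewrite nth_default ?normr0 ?coefmax_ge0.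
by rewrite /coefmax (bigD1 (Ordinal hi)) //= le_max lexx.
Qed.

Lemma coefmax_le p B : 0 <= B -> (forall i, `|p`_i| <= B) -> coefmax p <= B.
Proof. by move=> hB hp; rewrite /coefmax; elim/big_ind: _ => //= x y; rewrite ge_max => ->. Qed.

Lemma coefmaxD p q : coefmax (p + q) <= coefmax p + coefmax q.
Proof.
apply: coefmax_le => [|i]; first by rewrite addr_ge0 ?coefmax_ge0.
rewrite coefD; apply: le_trans (ler_normD _ _) _.
by rewrite lerD ?normr_coef_le_coefmax.
Qed.

Lemma coefmaxMn p n : coefmax (p *+ n) <= coefmax p *+ n.
Proof.
apply: coefmax_le => [|i]; first by rewrite mulrn_wge0 ?coefmax_ge0.
by rewrite coefMn normrMn ler_wMn2r ?normr_coef_le_coefmax.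
Qed.

Lemma coefmax_sum (I : Type) (r : seq I) (P : pred I) (F : I -> {poly R}) :
  coefmax (\sum_(i <- r | P i) F i) <= \sum_(i <- r | P i) coefmax (F i).
Proof.
elim/big_rec2: _ => [|i y p _ IH]; first by apply: coefmax_le => // i; rewrite coef0 normr0.
by apply: le_trans (coefmaxD _ _) _; rewrite lerD2l.
Qed.

Lemma sum_normr_coef_le p n :
  \sum_(i < n) `|p`_i| <= (minn n (size p))%:R * coefmax p.
Proof.
elim: n => [|n IH]; first by rewrite big_ord0 min0n mul0r.
rewrite big_ord_recr /=.
have [hn|hn] := ltnP n (size p); last first.
  have -> : minn n.+1 (size p) = minn n (size p) by lia.
  by rewrite nth_default // normr0 addr0.
have -> : minn n.+1 (size p) = (minn n (size p)).+1 by lia.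
by rewrite -addn1 natrD mulrDl mul1r lerD ?normr_coef_le_coefmax.
Qed.

Lemma coefmaxM (n : nat) p q : (size p <= n)%N ->
  coefmax (p * q) <= n%:R * coefmax p * coefmax q.
Proof.
move=> hp; apply: coefmax_le => [|j]; first by rewrite !mulr_ge0 ?coefmax_ge0.
rewrite coefM; apply: le_trans (ler_norm_sum _ _ _) _.
apply: (@le_trans _ _ (\sum_(i < j.+1) `|p`_i| * coefmax q)).
  by apply: ler_sum => i _; rewrite normrM ler_wpM2l ?normr_coef_le_coefmax.
rewrite -mulr_suml ler_wpM2r ?coefmax_ge0 //.
apply: le_trans (sum_normr_coef_le _ _) _.
by rewrite ler_wpM2r ?coefmax_ge0 // ler_nat; lia.
Qed.

Lemma coefmax_sqrB (n : nat) p q : (size (q - p)%R <= n)%N ->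
  coefmax (q ^+ 2 - p ^+ 2)
    <= n%:R * coefmax (q - p) * (coefmax (q - p) + 2 * coefmax p).
Proof.
move=> hn.
have -> : q ^+ 2 - p ^+ 2 = (q - p) * (q - p) + ((q - p) * p) *+ 2 by ring.
apply: le_trans (coefmaxD _ _) _.
apply: le_trans (lerD (coefmaxM (q - p) hn) (coefmaxMn _ 2)) _.
have -> : n%:R * coefmax (q - p) * (coefmax (q - p) + 2 * coefmax p)
  = n%:R * coefmax (q - p) * coefmax (q - p)
    + (n%:R * coefmax (q - p) * coefmax p) *+ 2 by ring.
by rewrite lerD2l ler_wMn2r ?coefmaxM.
Qed.

End CoefMax.

Section SupNorm.
Variable R : realType.
Implicit Types p : {poly R}.

Lemma normr_horner_le p t : -1 <= t <= 1 -> `|p.[t]| <= \sum_(i < size p) `|p`_i|.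
Proof.
move=> ht; rewrite horner_coef; apply: le_trans (ler_norm_sum _ _ _) _.
apply: ler_sum => i _; rewrite normrM normrX ler_piMr //.
by rewrite exprn_ile1 // ler_norml; lra.
Qed.

Lemma normr_horner_le_supnorm p t : -1 <= t <= 1 -> `|p.[t]| <= supnorm p.
Proof.
move=> ht; rewrite /supnorm; apply: ub_le_sup; last by exists t.
by exists (\sum_(i < size p) `|p`_i|) => _ [s hs <-]; exact: normr_horner_le.
Qed.

Lemma supnorm_le p B : (forall t, -1 <= t <= 1 -> `|p.[t]| <= B) -> supnorm p <= B.
Proof.
move=> hp; rewrite /supnorm; apply: ge_sup; last by move=> _ [s hs <-]; apply: hp.
by exists `|p.[0]|, 0 => //=; lra.
Qed.

Lemma supnorm_le_sqrt_sum_sqr (I : finType) (F : I -> {poly R}) i :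
  supnorm (F i) <= Num.sqrt (supnorm (\sum_j F j ^+ 2)).
Proof.
apply: supnorm_le => t ht; rewrite -sqrtr_sqr ler_wsqrtr //.
apply: le_trans _ (le_trans (ler_norm _) (normr_horner_le_supnorm _ ht)).
rewrite horner_sum (bigD1 i) //= horner_exp lerDl.
by apply: sumr_ge0 => j _; rewrite horner_exp sqr_ge0.
Qed.

End SupNorm.

Theorem lemma1p13 (R : realType) (m k : nat) (beta : R) :
  0 < beta ->
  (forall h : {poly R}, (size h <= m.+1)%N -> coefmax h <= beta * supnorm h) ->
  forall (f g : 'I_k -> {poly R}),
  (forall i, (size (f i) <= m.+1)%N) ->
  (forall i, (size (g i) <= m.+1)%N) ->
  forall eps : R, 0 <= eps ->
  (forall i, coefmax (g i - f i) <= eps) ->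
  coefmax ((\sum_(i < k) g i ^+ 2) - (\sum_(i < k) f i ^+ 2))
    <= m.+1%:R * k%:R * eps
       * (eps + 2 * beta * Num.sqrt (supnorm (\sum_(i < k) f i ^+ 2))).
Proof.
move=> beta_gt0 hbeta f g hf hg eps eps_ge0 hd.
set s := Num.sqrt _.
have coefmax_f i : coefmax (f i) <= beta * s.
  by apply: le_trans (hbeta _ (hf i)) _; rewrite ler_pM2l ?supnorm_le_sqrt_sum_sqr.
have term_le i : coefmax (g i ^+ 2 - f i ^+ 2) <= m.+1%:R * eps * (eps + 2 * beta * s).
  have hsize : (size (g i - f i)%R <= m.+1)%N.
    by apply: leq_trans (size_polyD _ _) _; rewrite size_polyN geq_max hf hg.
  apply: le_trans (coefmax_sqrB hsize) _; rewrite -!mulrA ler_wpM2l //.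
  have hcd := coefmax_ge0 (g i - f i); have hcf := coefmax_ge0 (f i).
  by rewrite ler_pM ?addr_ge0 ?mulr_ge0 // lerD // ler_wpM2l.
rewrite -sumrB; apply: le_trans (coefmax_sum _ _ _) _.
apply: le_trans (ler_sum _ (fun i _ => term_le i)) _.
have -> : m.+1%:R * k%:R * eps * (eps + 2 * beta * s)
  = m.+1%:R * eps * (eps + 2 * beta * s) * k%:R by ring.
by rewrite sumr_const card_ord mulr_natr.
Qed.
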